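(* The $\Bbbk$-linear monoidal functor $\mathcal{AW}\to\mathcal{AS}$ which is the identity on generating objects $a\ge1$ and sends the generating morphisms $M_{a,b},S_{a,b},X_{a,b},\omega_a$ of $\mathcal{AW}$ to the morphisms with the same names in $\mathcal{AS}$ is faithful and full; that is, $\mathcal{AW}$ is a full subcategory of $\mathcal{AS}$.
   Context: Let $\Bbbk$ be a commutative ring with $1$. The affine Schur category $\mathcal{AS}$ is the strict $\Bbbk$-linear monoidal category defined as follows. Generating objects: the integers $a\ge1$ (black strands of thickness $a$) and the elements $u\in\Bbbk$ (red strands labelled $u$); objects are finite words in these, tensor product being concatenation. Generating morphisms, for $a,b\ge1$, $u\in\Bbbk$: merge $M_{a,b}:(a,b)\to(a+b)$, split $S_{a,b}:(a+b)\to(a,b)$, crossing $X_{a,b}:(a,b)\to(b,a)$, dot $\omega_a:(a)\to(a)$, traverse-up $U_{a,u}:(a,u)\to(u,a)$, traverse-down $D_{u,a}:(u,a)\to(a,u)$. Conventions: a black strand of thickness $0$ is the unit object and any merge, split or crossing involving a thickness-$0$ strand is an identity. Derived morphisms: $\omega_{a,0}:=1_a$; $\omega_{a,r}:=M_{r,a-r}(\omega_r\otimes1_{a-r})S_{r,a-r}$ for $1\le r\le a$; $\omega_{a,r}:=0$ if $r<0$ or $r>a$; $S^{(a)},M^{(a)}$ iterated splits/merges between $(a)$ and $(1,\dots,1)$; $g_r(u):=\sum_{i=0}^{r}(-1)^i\big(\prod_{j=0}^{i-1}(u+j)\big)\omega_{r,r-i}$. Defining relations, for all $a,b,c,d,r\ge1$,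 $u\in\Bbbk$: (R1) $M_{a+b,c}(M_{a,b}\otimes1_c)=M_{a,b+c}(1_a\otimes M_{b,c})$, $(S_{a,b}\otimes1_c)S_{a+b,c}=(1_a\otimes S_{b,c})S_{a,b+c}$; (R2) if $a+c=b+d$: $S_{b,d}M_{a,c}=\sum(M_{s,c-t}\otimes M_{a-s,t})(1_s\otimes X_{a-s,c-t}\otimes1_t)(S_{s,a-s}\otimes S_{c-t,t})$ over $0\le s\le\min(a,b)$, $0\le t\le\min(c,d)$, $t-s=d-a$; (R3) $M_{a,b}S_{a,b}=\binom{a+b}{a}1_{a+b}$; (R4) $(\omega_b\otimes1_a)X_{a,b}=\sum_{t=0}^{\min(a,b)}t!\,(M_{t,b-t}\otimes M_{a-t,t})(1_t\otimes X_{a-t,b-t}\otimes1_t)(1_t\otimes1_{a-t}\otimes\omega_{b-t}\otimes1_t)(S_{t,a-t}\otimes S_{b-t,t})$ and $X_{b,a}(\omega_b\otimes1_a)=\sum_{t=0}^{\min(a,b)}t!\,(M_{t,a-t}\otimes M_{b-t,t})(1_t\otimes1_{a-t}\otimes\omega_{b-t}\otimes1_t)(1_t\otimes X_{b-t,a-t}\otimes1_t)(S_{t,b-t}\otimes S_{a-t,t})$; (R5) $S_{a,b}\omega_{a+b}=(\omega_a\otimes\omega_b)S_{a,b}$, $\omega_{a+b}M_{a,b}=M_{a,b}(\omega_a\otimes\omega_b)$; (R6) $M^{(a)}(\omega_1\otimes\cdots\otimes\omega_1)S^{(a)}=a!\,\omega_a$; (R7) $D_{u,r}U_{r,u}=g_r(u)\otimes1_u$,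 $U_{r,u}D_{u,r}=1_u\otimes g_r(u)$; (R8) $(D_{u,b}\otimes1_a)(1_u\otimes X_{a,b})(U_{a,u}\otimes1_b)=(1_b\otimes U_{a,u})(X_{a,b}\otimes1_u)(1_a\otimes D_{u,b})+\sum_{t=1}^{\min(a,b)}t!\,(M_{t,b-t}\otimes1_u\otimes M_{a-t,t})(1_t\otimes1_{b-t}\otimes U_{a-t,u}\otimes1_t)(1_t\otimes X_{a-t,b-t}\otimes1_u\otimes1_t)(1_t\otimes1_{a-t}\otimes D_{u,b-t}\otimes1_t)(S_{t,a-t}\otimes1_u\otimes S_{b-t,t})$; (R9) $(1_u\otimes S_{b,c})U_{b+c,u}=(U_{b,u}\otimes1_c)(1_b\otimes U_{c,u})(S_{b,c}\otimes1_u)$, $(S_{a,b}\otimes1_u)D_{u,a+b}=(1_a\otimes D_{u,b})(D_{u,a}\otimes1_b)(1_u\otimes S_{a,b})$, $D_{u,b+c}(1_u\otimes M_{b,c})=(M_{b,c}\otimes1_u)(1_b\otimes D_{u,c})(D_{u,b}\otimes1_c)$, $U_{a+b,u}(M_{a,b}\otimes1_u)=(1_u\otimes M_{a,b})(U_{a,u}\otimes1_b)(1_a\otimes U_{b,u})$. The affine web category $\mathcal{AW}$ is the strict $\Bbbk$-linear monoidal category with generating objects the integers $a\ge1$ only, generating morphisms $M_{a,b},S_{a,b},X_{a,b},\omega_a$ ($a,b\ge1$), and defining relations (R1)–(R6). *)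

(* Morphisms are (untyped) diagram terms with a typing judgement
   [has_type]; the hom-space Hom(s,t) is the set of terms of type s -> t modulo
   the congruence [eqv sch s t] generated by the axioms of a strict k-linear
   monoidal category and the defining relations.  The flag [sch] selects the
   category: [sch = false] is AW (black strands only, relations R1-R6),
   [sch = true] is AS (red strands and traverses allowed, relations R1-R9). *)
From mathcomp Require Import all_boot all_order all_algebra.
Set Implicit Arguments. Unset Strict Implicit. Unset Printing Implicit Defensive.
Import GRing.Theory.
Local Open Scope ring_scope.

(* generating objects: black strands of thickness n (n >= 1), red strands u *)
Inductive lab (R : Type) := Blk of nat | Red of R.
Arguments Blk {R}.

Inductive term (R : Type) :=
| TId of seq (lab R)
| TComp of term R & term R   (* TComp g f = g o f *)
| TTens of term R & term R
| TZero
| TAdd of term R & term R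
| TScal of R & term R
| GM of nat & nat
| GS of nat & nat
| GX of nat & nat
| GW of nat                  (* dot omega_a *)
| GU of nat & R              (* traverse-up U_{a,u} *)
| GD of R & nat.             (* traverse-down D_{u,a} *)
Arguments TZero {R}.
Arguments GM {R}. Arguments GS {R}. Arguments GX {R}. Arguments GW {R}.

Section Presentation.
Variable R : comPzRingType.

Notation obj := (seq (lab R)).
Notation tm := (term R).

Definition valid (sch : bool) (l : lab R) : bool :=
  match l with Blk n => (0 < n)%N | Red _ => sch end.

Inductive has_type (sch : bool) : tm -> obj -> obj -> Prop :=
| ht_id s : all (valid sch) s -> has_type sch (TId s) s s
| ht_comp f g s t u : has_type sch f s t -> has_type sch g t u ->
    has_type sch (TComp g f) s u
| ht_tens f g s t s' t' : has_type sch f s t -> has_type sch g s' t' ->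
    has_type sch (TTens f g) (s ++ s') (t ++ t')
| ht_zero s t : all (valid sch) s -> all (valid sch) t -> has_type sch TZero s t
| ht_add f g s t : has_type sch f s t -> has_type sch g s t ->
    has_type sch (TAdd f g) s t
| ht_scal c f s t : has_type sch f s t -> has_type sch (TScal c f) s t
| ht_M a b : (0 < a)%N -> (0 < b)%N ->
    has_type sch (GM a b) [:: Blk a; Blk b] [:: Blk (a + b)]
| ht_S a b : (0 < a)%N -> (0 < b)%N ->
    has_type sch (GS a b) [:: Blk (a + b)] [:: Blk a; Blk b]
| ht_X a b : (0 < a)%N -> (0 < b)%N ->
    has_type sch (GX a b) [:: Blk a; Blk b] [:: Blk b; Blk a]
| ht_W a : (0 < a)%N -> has_type sch (GW a) [:: Blk a] [:: Blk a]
| ht_U a u : sch -> (0 < a)%N ->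
    has_type sch (GU a u) [:: Blk a; Red u] [:: Red u; Blk a]
| ht_D u a : sch -> (0 < a)%N ->
    has_type sch (GD u a) [:: Red u; Blk a] [:: Blk a; Red u].

Definition bk (a : nat) : obj := if a is 0 then [::] else [:: Blk a].
Definition ru (u : R) : tm := TId [:: Red u].
Definition idb (a : nat) : tm := TId (bk a).
Definition Mg (a b : nat) : tm :=
  if (a == 0)%N || (b == 0)%N then TId (bk (a + b)) else GM a b.
Definition Sp (a b : nat) : tm :=
  if (a == 0)%N || (b == 0)%N then TId (bk (a + b)) else GS a b.
Definition Xc (a b : nat) : tm :=
  if (a == 0)%N || (b == 0)%N then TId (bk a ++ bk b) else GX a b.
Definition Wd (a : nat) : tm := if a is 0 then TId [::] else GW a.
Definition Up (a : nat) (u : R) : tm := if a is 0 then ru u else GU a u.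
Definition Dn (u : R) (a : nat) : tm := if a is 0 then ru u else GD u a.

Definition tsum (l : seq tm) : tm := foldr (@TAdd R) TZero l.
Definition nsc (n : nat) (f : tm) : tm := TScal (n%:R) f.

Definition wAr (a r : nat) : tm :=
  if r == 0%N then idb a
  else if (r <= a)%N then
    TComp (Mg r (a - r)) (TComp (TTens (Wd r) (idb (a - r))) (Sp r (a - r)))
  else TZero.

Fixpoint Sit (a : nat) : tm :=
  if a is a'.+1 then TComp (TTens (idb 1) (Sit a')) (Sp 1 a') else TId [::].
Fixpoint Mit (a : nat) : tm :=
  if a is a'.+1 then TComp (Mg 1 a') (TTens (idb 1) (Mit a')) else TId [::].
Fixpoint Wones (a : nat) : tm :=
  if a is a'.+1 then TTens (GW 1) (Wones a') else TId [::].

Definition gr (r : nat) (u : R) : tm :=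
  tsum [seq TScal ((-1) ^+ i * \prod_(j < i) (u + j%:R)) (wAr r (r - i))
       | i <- iota 0 r.+1].

Definition R2term (a c s t : nat) : tm :=
  TComp (TTens (Mg s (c - t)) (Mg (a - s) t))
   (TComp (TTens (idb s) (TTens (Xc (a - s) (c - t)) (idb t)))
          (TTens (Sp s (a - s)) (Sp (c - t) t))).

Definition R4aterm (a b t : nat) : tm :=
  nsc t`! (TComp (TTens (Mg t (b - t)) (Mg (a - t) t))
   (TComp (TTens (idb t) (TTens (Xc (a - t) (b - t)) (idb t)))
   (TComp (TTens (idb t) (TTens (idb (a - t)) (TTens (Wd (b - t)) (idb t))))
          (TTens (Sp t (a - t)) (Sp (b - t) t))))).

Definition R4bterm (a b t : nat) : tm :=
  nsc t`! (TComp (TTens (Mg t (a - t)) (Mg (b - t) t))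
   (TComp (TTens (idb t) (TTens (idb (a - t)) (TTens (Wd (b - t)) (idb t))))
   (TComp (TTens (idb t) (TTens (Xc (b - t) (a - t)) (idb t)))
          (TTens (Sp t (b - t)) (Sp (a - t) t))))).

Definition R8term (a b : nat) (u : R) (t : nat) : tm :=
  nsc t`! (TComp (TTens (Mg t (b - t)) (TTens (ru u) (Mg (a - t) t)))
   (TComp (TTens (idb t) (TTens (idb (b - t)) (TTens (Up (a - t) u) (idb t))))
   (TComp (TTens (idb t) (TTens (Xc (a - t) (b - t)) (TTens (ru u) (idb t))))
   (TComp (TTens (idb t) (TTens (idb (a - t)) (TTens (Dn u (b - t)) (idb t))))
          (TTens (Sp t (a - t)) (TTens (ru u) (Sp (b - t) t))))))).

(* instances of the defining relations (R1)-(R6), and (R7)-(R9) for AS;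
   [rel_inst sch s t lhs rhs] : lhs = rhs as morphisms s -> t *)
Inductive rel_inst (sch : bool) : obj -> obj -> tm -> tm -> Prop :=
| R1a a b c : (0 < a)%N -> (0 < b)%N -> (0 < c)%N ->
    rel_inst sch (bk a ++ bk b ++ bk c) (bk (a + b + c))
      (TComp (Mg (a + b) c) (TTens (Mg a b) (idb c)))
      (TComp (Mg a (b + c)) (TTens (idb a) (Mg b c)))
| R1b a b c : (0 < a)%N -> (0 < b)%N -> (0 < c)%N ->
    rel_inst sch (bk (a + b + c)) (bk a ++ bk b ++ bk c)
      (TComp (TTens (Sp a b) (idb c)) (Sp (a + b) c))
      (TComp (TTens (idb a) (Sp b c)) (Sp a (b + c)))
| R2 a b c d : (0 < a)%N -> (0 < b)%N -> (0 < c)%N -> (0 < d)%N ->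
    (a + c = b + d)%N ->
    rel_inst sch (bk a ++ bk c) (bk b ++ bk d)
      (TComp (Sp b d) (Mg a c))
      (tsum [seq R2term a c s t | s <- iota 0 (minn a b).+1,
                 t <- [seq t <- iota 0 (minn c d).+1 | (t + a == d + s)%N]])
| R3 a b : (0 < a)%N -> (0 < b)%N ->
    rel_inst sch (bk (a + b)) (bk (a + b))
      (TComp (Mg a b) (Sp a b)) (nsc 'C(a + b, a) (idb (a + b)))
| R4a a b : (0 < a)%N -> (0 < b)%N ->
    rel_inst sch (bk a ++ bk b) (bk b ++ bk a)
      (TComp (TTens (Wd b) (idb a)) (Xc a b))
      (tsum [seq R4aterm a b t | t <- iota 0 (minn a b).+1])
| R4b a b : (0 < a)%N -> (0 < b)%N ->
    rel_inst sch (bk b ++ bk a) (bk a ++ bk b)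
      (TComp (Xc b a) (TTens (Wd b) (idb a)))
      (tsum [seq R4bterm a b t | t <- iota 0 (minn a b).+1])
| R5a a b : (0 < a)%N -> (0 < b)%N ->
    rel_inst sch (bk (a + b)) (bk a ++ bk b)
      (TComp (Sp a b) (Wd (a + b))) (TComp (TTens (Wd a) (Wd b)) (Sp a b))
| R5b a b : (0 < a)%N -> (0 < b)%N ->
    rel_inst sch (bk a ++ bk b) (bk (a + b))
      (TComp (Wd (a + b)) (Mg a b)) (TComp (Mg a b) (TTens (Wd a) (Wd b)))
| R6 a : (0 < a)%N ->
    rel_inst sch (bk a) (bk a)
      (TComp (Mit a) (TComp (Wones a) (Sit a))) (nsc a`! (Wd a))
| R7a r u : sch -> (0 < r)%N ->
    rel_inst sch (bk r ++ [:: Red u]) (bk r ++ [:: Red u])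
      (TComp (Dn u r) (Up r u)) (TTens (gr r u) (ru u))
| R7b r u : sch -> (0 < r)%N ->
    rel_inst sch ([:: Red u] ++ bk r) ([:: Red u] ++ bk r)
      (TComp (Up r u) (Dn u r)) (TTens (ru u) (gr r u))
| R8 a b u : sch -> (0 < a)%N -> (0 < b)%N ->
    rel_inst sch (bk a ++ [:: Red u] ++ bk b) (bk b ++ [:: Red u] ++ bk a)
      (TComp (TTens (Dn u b) (idb a))
         (TComp (TTens (ru u) (Xc a b)) (TTens (Up a u) (idb b))))
      (TAdd (TComp (TTens (idb b) (Up a u))
               (TComp (TTens (Xc a b) (ru u)) (TTens (idb a) (Dn u b))))
            (tsum [seq R8term a b u t | t <- iota 1 (minn a b)]))
| R9a b c u : sch -> (0 < b)%N -> (0 < c)%N ->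
    rel_inst sch (bk (b + c) ++ [:: Red u]) ([:: Red u] ++ bk b ++ bk c)
      (TComp (TTens (ru u) (Sp b c)) (Up (b + c) u))
      (TComp (TTens (Up b u) (idb c))
         (TComp (TTens (idb b) (Up c u)) (TTens (Sp b c) (ru u))))
| R9b a b u : sch -> (0 < a)%N -> (0 < b)%N ->
    rel_inst sch ([:: Red u] ++ bk (a + b)) (bk a ++ bk b ++ [:: Red u])
      (TComp (TTens (Sp a b) (ru u)) (Dn u (a + b)))
      (TComp (TTens (idb a) (Dn u b))
         (TComp (TTens (Dn u a) (idb b)) (TTens (ru u) (Sp a b))))
| R9c b c u : sch -> (0 < b)%N -> (0 < c)%N ->
    rel_inst sch ([:: Red u] ++ bk b ++ bk c) (bk (b + c) ++ [:: Red u])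
      (TComp (Dn u (b + c)) (TTens (ru u) (Mg b c)))
      (TComp (TTens (Mg b c) (ru u))
         (TComp (TTens (idb b) (Dn u c)) (TTens (Dn u b) (idb c))))
| R9d a b u : sch -> (0 < a)%N -> (0 < b)%N ->
    rel_inst sch (bk a ++ bk b ++ [:: Red u]) ([:: Red u] ++ bk (a + b))
      (TComp (Up (a + b) u) (TTens (Mg a b) (ru u)))
      (TComp (TTens (ru u) (Mg a b))
         (TComp (TTens (Up a u) (idb b)) (TTens (idb a) (Up b u)))).

Inductive eqv (sch : bool) : obj -> obj -> tm -> tm -> Prop :=
| eqv_refl f s t : has_type sch f s t -> eqv sch s t f f
| eqv_sym f g s t : eqv sch s t f g -> eqv sch s t g f
| eqv_trans f g h s t : eqv sch s t f g -> eqv sch s t g h -> eqv sch s t f h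
| eqv_comp f f' g g' s t u : eqv sch s t f f' -> eqv sch t u g g' ->
    eqv sch s u (TComp g f) (TComp g' f')
| eqv_tens f f' g g' s t s' t' : eqv sch s t f f' -> eqv sch s' t' g g' ->
    eqv sch (s ++ s') (t ++ t') (TTens f g) (TTens f' g')
| eqv_add f f' g g' s t : eqv sch s t f f' -> eqv sch s t g g' ->
    eqv sch s t (TAdd f g) (TAdd f' g')
| eqv_scal c f f' s t : eqv sch s t f f' -> eqv sch s t (TScal c f) (TScal c f')
| eqv_compA f g h s t u v : has_type sch f s t -> has_type sch g t u ->
    has_type sch h u v ->
    eqv sch s v (TComp h (TComp g f)) (TComp (TComp h g) f)
| eqv_id_l f s t : has_type sch f s t -> eqv sch s t (TComp (TId t) f) f
| eqv_id_r f s t : has_type sch f s t -> eqv sch s t (TComp f (TId s)) f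
| eqv_tensA f g h s1 t1 s2 t2 s3 t3 : has_type sch f s1 t1 ->
    has_type sch g s2 t2 -> has_type sch h s3 t3 ->
    eqv sch (s1 ++ s2 ++ s3) (t1 ++ t2 ++ t3)
      (TTens (TTens f g) h) (TTens f (TTens g h))
| eqv_tens1l f s t : has_type sch f s t -> eqv sch s t (TTens (TId [::]) f) f
| eqv_tens1r f s t : has_type sch f s t -> eqv sch s t (TTens f (TId [::])) f
| eqv_tensId s s' : all (valid sch) s -> all (valid sch) s' ->
    eqv sch (s ++ s') (s ++ s') (TTens (TId s) (TId s')) (TId (s ++ s'))
| eqv_interchange f f' g g' s t u s' t' u' :
    has_type sch f s t -> has_type sch g t u ->
    has_type sch f' s' t' -> has_type sch g' t' u' ->
    eqv sch (s ++ s') (u ++ u')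
      (TComp (TTens g g') (TTens f f')) (TTens (TComp g f) (TComp g' f'))
| eqv_addA f g h s t : has_type sch f s t -> has_type sch g s t ->
    has_type sch h s t ->
    eqv sch s t (TAdd f (TAdd g h)) (TAdd (TAdd f g) h)
| eqv_addC f g s t : has_type sch f s t -> has_type sch g s t ->
    eqv sch s t (TAdd f g) (TAdd g f)
| eqv_add0 f s t : has_type sch f s t -> eqv sch s t (TAdd TZero f) f
| eqv_scal1 f s t : has_type sch f s t -> eqv sch s t (TScal 1 f) f
| eqv_scalA c d f s t : has_type sch f s t ->
    eqv sch s t (TScal c (TScal d f)) (TScal (c * d) f)
| eqv_scalDl c d f s t : has_type sch f s t ->
    eqv sch s t (TScal (c + d) f) (TAdd (TScal c f) (TScal d f))
| eqv_scalDr c f g s t : has_type sch f s t -> has_type sch g s t ->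
    eqv sch s t (TScal c (TAdd f g)) (TAdd (TScal c f) (TScal c g))
| eqv_scal0 f s t : has_type sch f s t -> eqv sch s t (TScal 0 f) TZero
| eqv_compDl f g g' s t u : has_type sch f s t -> has_type sch g t u ->
    has_type sch g' t u ->
    eqv sch s u (TComp (TAdd g g') f) (TAdd (TComp g f) (TComp g' f))
| eqv_compDr f f' g s t u : has_type sch f s t -> has_type sch f' s t ->
    has_type sch g t u ->
    eqv sch s u (TComp g (TAdd f f')) (TAdd (TComp g f) (TComp g f'))
| eqv_compZl c f g s t u : has_type sch f s t -> has_type sch g t u ->
    eqv sch s u (TComp (TScal c g) f) (TScal c (TComp g f))
| eqv_compZr c f g s t u : has_type sch f s t -> has_type sch g t u ->
    eqv sch s u (TComp g (TScal c f)) (TScal c (TComp g f))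
| eqv_tensDl f f' g s t s' t' : has_type sch f s t -> has_type sch f' s t ->
    has_type sch g s' t' ->
    eqv sch (s ++ s') (t ++ t') (TTens (TAdd f f') g)
      (TAdd (TTens f g) (TTens f' g))
| eqv_tensDr f g g' s t s' t' : has_type sch f s t -> has_type sch g s' t' ->
    has_type sch g' s' t' ->
    eqv sch (s ++ s') (t ++ t') (TTens f (TAdd g g'))
      (TAdd (TTens f g) (TTens f g'))
| eqv_tensZl c f g s t s' t' : has_type sch f s t -> has_type sch g s' t' ->
    eqv sch (s ++ s') (t ++ t') (TTens (TScal c f) g) (TScal c (TTens f g))
| eqv_tensZr c f g s t s' t' : has_type sch f s t -> has_type sch g s' t' ->
    eqv sch (s ++ s') (t ++ t') (TTens f (TScal c g)) (TScal c (TTens f g))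
| eqv_rel f g s t : rel_inst sch s t f g -> has_type sch f s t ->
    has_type sch g s t -> eqv sch s t f g.

End Presentation.

(* No generating morphism changes the number of red strands, so a composite
   between black objects which passes through an object with a red strand is
   built, syntactically, with a zero factor ([null_term]).  Replacing such
   composites and all traverses by 0 gives a map [retract] from AS-terms between
   black objects to AW-terms.  It is equivalent to the identity in AS, and it
   respects the congruence of AS: instances of (R7)-(R9) have a red strand in
   their source, and instances of (R1)-(R6) are fixed by [retract].  Thus
   [retract] is a left inverse of the functor on hom-spaces (faithfulness), and
   every AS-morphism h between black objects equals the AW-morphism
   [retract h] (fullness). *)

From mathcomp Require Import all_boot all_order all_algebra.
Set Implicit Arguments. Unset Strict Implicit. Unset Printing Implicit Defensive.
Import GRing.Theory.
Local Open Scope ring_scope.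

Section Retraction.
Variable R : comPzRingType.
Notation tm := (term R).
Notation obj := (seq (lab R)).

Definition is_red (l : lab R) : bool := if l is Red _ then true else false.
Definition black (s : obj) : bool := all (valid false) s.

Lemma black_cat (s t : obj) : black (s ++ t) = black s && black t.
Proof. exact: all_cat. Qed.

Lemma black_valid sch (s : obj) : black s -> all (valid sch) s.
Proof. by apply: sub_all => -[]. Qed.

Lemma valid_blackE sch (s : obj) :
  all (valid sch) s -> black s = (count is_red s == 0%N).
Proof.
rewrite /black; elim: s => //= l s IH /andP[vl /IH ->].
by case: l vl => [n|u] /= => [->|].
Qed.

Lemma has_type_valid sch (f : tm) (s t : obj) :
  has_type sch f s t -> all (valid sch) s /\ all (valid sch) t.
Proof.
elim=> {f s t} //=; try by move=> *; rewrite ?addn_gt0;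
  do ![split | apply/andP; split | apply/orP; left].
- by move=> f g s t u _ [vs _] _ [_ vu].
- by move=> f g s t s' t' _ [vs vt] _ [vs' vt']; rewrite !all_cat vs vt vs' vt'.
Qed.

Fixpoint null_term (h : tm) : bool :=
  match h with
  | TZero => true
  | TComp g f => null_term g || null_term f
  | TTens f g => null_term f || null_term g
  | TAdd f g => null_term f && null_term g
  | TScal _ f => null_term f
  | _ => false
  end.

Lemma count_red_null sch (f : tm) (s t : obj) :
  has_type sch f s t -> count is_red s != count is_red t -> null_term f.
Proof.
elim=> {f s t} //=.
- by move=> s _; rewrite eqxx.
- move=> f g s t u _ IHf _ IHg.
  have [-> /IHg ->|/IHf -> _] := eqVneq (count is_red s) (count is_red t);
  by rewrite ?orbT.
- move=> f g s t s' t' _ IHf _ IHg; rewrite !count_cat.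
  have [e|/IHf -> //] := eqVneq (count is_red s) (count is_red t).
  by rewrite e eqn_add2l => /IHg ->; rewrite orbT.
- by move=> f g s t _ IHf _ IHg /[dup] /IHf -> /IHg.
Qed.

Lemma has_type_black sch (f : tm) (s t : obj) :
  has_type sch f s t -> ~~ null_term f -> black s = black t.
Proof.
move=> hf; apply: contraNeq => ne; have [vs vt] := has_type_valid hf.
apply: count_red_null hf _; apply: contraNneq ne => e.
by rewrite (valid_blackE vs) (valid_blackE vt) e.
Qed.

Lemma null_through_red sch (f g : tm) (s t u : obj) :
  has_type sch f s t -> has_type sch g t u -> black s -> black u -> ~~ black t ->
  null_term f && null_term g.
Proof.
move=> hf hg bs bu nbt; apply/andP; split; apply/contraR: nbt.
  by move/(has_type_black hf) <-.
by move/(has_type_black hg) ->.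
Qed.

Lemma eqv_zero_scal0 sch (s t : obj) : all (valid sch) s -> all (valid sch) t ->
  eqv sch s t TZero (TScal 0 TZero).
Proof. by move=> vs vt; apply/eqv_sym/eqv_scal0/ht_zero. Qed.

Lemma eqv_comp0r sch (g : tm) (s t u : obj) : all (valid sch) s ->
  has_type sch g t u -> eqv sch s u (TComp g TZero) TZero.
Proof.
move=> vs hg; have [vt vu] := has_type_valid hg.
have h0 : has_type sch TZero s t by apply: ht_zero.
apply: eqv_trans (eqv_comp (eqv_zero_scal0 vs vt) (eqv_refl hg)) _.
exact: eqv_trans (eqv_compZr _ h0 hg) (eqv_scal0 (ht_comp h0 hg)).
Qed.

Lemma eqv_comp0l sch (f : tm) (s t u : obj) : all (valid sch) u ->
  has_type sch f s t -> eqv sch s u (TComp TZero f) TZero.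
Proof.
move=> vu hf; have [vs vt] := has_type_valid hf.
have h0 : has_type sch TZero t u by apply: ht_zero.
apply: eqv_trans (eqv_comp (eqv_refl hf) (eqv_zero_scal0 vt vu)) _.
exact: eqv_trans (eqv_compZl _ hf h0) (eqv_scal0 (ht_comp hf h0)).
Qed.

Lemma eqv_tens0l sch (g : tm) (s t s' t' : obj) :
  all (valid sch) s -> all (valid sch) t -> has_type sch g s' t' ->
  eqv sch (s ++ s') (t ++ t') (TTens TZero g) TZero.
Proof.
move=> vs vt hg; have h0 : has_type sch TZero s t by apply: ht_zero.
apply: eqv_trans (eqv_tens (eqv_zero_scal0 vs vt) (eqv_refl hg)) _.
exact: eqv_trans (eqv_tensZl _ h0 hg) (eqv_scal0 (ht_tens h0 hg)).
Qed.

Lemma eqv_tens0r sch (f : tm) (s t s' t' : obj) :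
  all (valid sch) s' -> all (valid sch) t' -> has_type sch f s t ->
  eqv sch (s ++ s') (t ++ t') (TTens f TZero) TZero.
Proof.
move=> vs' vt' hf; have h0 : has_type sch TZero s' t' by apply: ht_zero.
apply: eqv_trans (eqv_tens (eqv_refl hf) (eqv_zero_scal0 vs' vt')) _.
exact: eqv_trans (eqv_tensZr _ hf h0) (eqv_scal0 (ht_tens hf h0)).
Qed.

Lemma eqv_null_term sch (f : tm) (s t : obj) :
  has_type sch f s t -> null_term f -> eqv sch s t f TZero.
Proof.
elim=> {f s t} //=.
- move=> f g s t u hf IHf hg IHg /orP[/IHg eg | /IHf ef].
    exact: eqv_trans (eqv_comp (eqv_refl hf) eg) (eqv_comp0l (has_type_valid hg).2 hf).
  exact: eqv_trans (eqv_comp ef (eqv_refl hg)) (eqv_comp0r (has_type_valid hf).1 hg).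
- move=> f g s t s' t' hf IHf hg IHg; have [vs vt] := has_type_valid hf.
  have [vs' vt'] := has_type_valid hg; case/orP=> [/IHf ef | /IHg eg].
    exact: eqv_trans (eqv_tens ef (eqv_refl hg)) (eqv_tens0l vs vt hg).
  exact: eqv_trans (eqv_tens (eqv_refl hf) eg) (eqv_tens0r vs' vt' hf).
- by move=> s t vs vt _; apply/eqv_refl/ht_zero.
- move=> f g s t hf IHf _ IHg /andP[/IHf ef /IHg eg].
  have [vs vt] := has_type_valid hf.
  exact: eqv_trans (eqv_add ef eg) (eqv_add0 (ht_zero vs vt)).
- move=> c f s t hf IHf /IHf ef; have [vs vt] := has_type_valid hf.
  apply: eqv_trans (eqv_scal c (eqv_trans ef (eqv_zero_scal0 vs vt))) _.
  have h0 : has_type sch TZero s t by apply: ht_zero.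
  by apply: eqv_trans (eqv_scalA _ _ h0) _; rewrite mulr0; apply: eqv_scal0.
Qed.

Lemma has_type_widen (f : tm) (s t : obj) :
  has_type false f s t -> has_type true f s t.
Proof. by elim=> *; econstructor; eauto using black_valid. Qed.

Lemma rel_inst_widen (f g : tm) (s t : obj) :
  rel_inst false s t f g -> rel_inst true s t f g.
Proof. by case=> *; constructor. Qed.

Lemma eqv_widen (f g : tm) (s t : obj) : eqv false s t f g -> eqv true s t f g.
Proof.
elim=> *;
  [ apply: eqv_refl | apply: eqv_sym | apply: eqv_trans | apply: eqv_comp
  | apply: eqv_tens | apply: eqv_add | apply: eqv_scal | apply: eqv_compA
  | apply: eqv_id_l | apply: eqv_id_r | apply: eqv_tensA | apply: eqv_tens1l
  | apply: eqv_tens1r | apply: eqv_tensId | apply: eqv_interchange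
  | apply: eqv_addA | apply: eqv_addC | apply: eqv_add0 | apply: eqv_scal1
  | apply: eqv_scalA | apply: eqv_scalDl | apply: eqv_scalDr | apply: eqv_scal0
  | apply: eqv_compDl | apply: eqv_compDr | apply: eqv_compZl | apply: eqv_compZr
  | apply: eqv_tensDl | apply: eqv_tensDr | apply: eqv_tensZl | apply: eqv_tensZr
  | apply: eqv_rel ]; eauto using has_type_widen, rel_inst_widen, black_valid.
Qed.

Lemma eqv_has_type sch (f g : tm) (s t : obj) :
  eqv sch s t f g -> has_type sch f s t /\ has_type sch g s t.
Proof.
have ht0 (f' : tm) (s' t' : obj) : has_type sch f' s' t' -> has_type sch TZero s' t'.
  by move=> hf; have [??] := has_type_valid hf; apply: ht_zero.
elim=> {f g s t}; try by intros; repeat match goal with H : _ /\ _ |- _ => case: H end;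
  split; repeat first [eassumption | eapply ht_comp | eapply ht_tens
  | eapply ht_add | eapply ht_scal | eapply ht0; eassumption].
- by move=> f s t hf; split=> //; exact: ht_comp hf (ht_id (has_type_valid hf).2).
- by move=> f s t hf; split=> //; exact: ht_comp (ht_id (has_type_valid hf).1) hf.
- move=> f g h s1 t1 s2 t2 s3 t3 hf hg hh; split; last exact: ht_tens hf (ht_tens hg hh).
  by rewrite !catA; exact: ht_tens (ht_tens hf hg) hh.
- by move=> f s t hf; split=> //; exact: ht_tens (ht_id (s := [::]) isT) hf.
- move=> f s t hf; split=> //; rewrite -[s]cats0 -[t]cats0.
  exact: ht_tens hf (ht_id (s := [::]) isT).
- move=> s s' vs vs'; split; first by apply: ht_tens; apply: ht_id.
  by apply: ht_id; rewrite all_cat vs.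
Qed.

Fixpoint retract (h : tm) : tm :=
  match h with
  | TComp g f => if null_term g || null_term f then TZero
                 else TComp (retract g) (retract f)
  | TTens f g => TTens (retract f) (retract g)
  | TAdd f g => TAdd (retract f) (retract g)
  | TScal c f => TScal c (retract f)
  | GU _ _ | GD _ _ => TZero
  | _ => h
  end.

Fixpoint reduced (h : tm) : bool :=
  match h with
  | TComp g f => [&& ~~ null_term g, ~~ null_term f, reduced g & reduced f]
  | TTens f g | TAdd f g => reduced f && reduced g
  | TScal _ f => reduced f
  | GU _ _ | GD _ _ => false
  | _ => true
  end.

Lemma retract_reduced (h : tm) : reduced h -> retract h = h.
Proof.
elim: h => //= [g IHg f IHf /and4P[/negbTE -> /negbTE -> /IHg -> /IHf ->] //|||].
- by move=> f IHf g IHg /andP[/IHf -> /IHg ->].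
- by move=> f IHf g IHg /andP[/IHf -> /IHg ->].
- by move=> c f IHf /IHf ->.
Qed.

Lemma null_term_retract (h : tm) : null_term h -> null_term (retract h).
Proof.
elim: h => //= [g _ f _ -> // | f IHf g IHg | f IHf g IHg].
- by case/orP=> [/IHf | /IHg] ->; rewrite ?orbT.
- by case/andP=> /IHf -> /IHg.
Qed.

Lemma has_type_retract sch (h : tm) (s t : obj) :
  has_type sch h s t -> black s -> black t -> has_type false (retract h) s t.
Proof.
elim=> {h s t} /=.
- by move=> s _ bs _; apply: ht_id.
- move=> f g s t u hf IHf hg IHg bs bu.
  case: ifP => [_ | /norP[_ nf]]; first exact: ht_zero.
  have bt : black t by rewrite -(has_type_black hf nf).
  exact: ht_comp (IHf bs bt) (IHg bt bu).
- move=> f g s t s' t' _ IHf _ IHg; rewrite !black_cat => /andP[bs bs'] /andP[bt bt'].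
  exact: ht_tens (IHf bs bt) (IHg bs' bt').
- by move=> s t _ _ bs bt; apply: ht_zero.
- by move=> f g s t _ IHf _ IHg bs bt; apply: ht_add (IHf bs bt) (IHg bs bt).
- by move=> c f s t _ IHf bs bt; apply: ht_scal (IHf bs bt).
1-4: by move=> *; constructor.
- by move=> a u _ _ _ [].
- by move=> u a _ _ [].
Qed.

Lemma eqv_retract_term sch (h : tm) (s t : obj) :
  has_type sch h s t -> black s -> black t -> eqv sch s t (retract h) h.
Proof.
elim=> {h s t} /=.
- by move=> s vs _ _; apply/eqv_refl/ht_id.
- move=> f g s t u hf IHf hg IHg bs bu.
  case: ifP => [nfg | /norP[_ nf]].
    by apply/eqv_sym/eqv_null_term; [apply: ht_comp hg | rewrite /= nfg].
  have bt : black t by rewrite -(has_type_black hf nf).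
  exact: eqv_comp (IHf bs bt) (IHg bt bu).
- move=> f g s t s' t' _ IHf _ IHg; rewrite !black_cat => /andP[bs bs'] /andP[bt bt'].
  exact: eqv_tens (IHf bs bt) (IHg bs' bt').
- by move=> s t vs vt _ _; apply/eqv_refl/ht_zero.
- by move=> f g s t _ IHf _ IHg bs bt; apply: eqv_add (IHf bs bt) (IHg bs bt).
- by move=> c f s t _ IHf bs bt; apply: eqv_scal (IHf bs bt).
1-4: by move=> *; apply: eqv_refl; constructor.
- by move=> a u _ _ _ [].
- by move=> u a _ _ [].
Qed.

Lemma retract_comp sch (f g : tm) (s t u : obj) :
  has_type sch f s t -> has_type sch g t u -> black s -> black t -> black u ->
  eqv false s u (retract (TComp g f)) (TComp (retract g) (retract f)).
Proof.
move=> hf hg bs bt bu.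
have hgf := ht_comp (has_type_retract hf bs bt) (has_type_retract hg bt bu).
rewrite /=; case: ifP => [nfg | _]; last exact: eqv_refl.
apply/eqv_sym/eqv_null_term => //=.
by case/orP: nfg => /null_term_retract ->; rewrite ?orbT.
Qed.

Lemma retract_null sch (f g : tm) (s t : obj) :
  eqv sch s t f g -> black s -> black t -> null_term f -> null_term g ->
  eqv false s t (retract f) (retract g).
Proof.
case/eqv_has_type=> hf hg bs bt /null_term_retract nf /null_term_retract ng.
apply: eqv_trans (eqv_null_term (has_type_retract hf bs bt) nf) _.
exact/eqv_sym/(eqv_null_term (has_type_retract hg bs bt) ng).
Qed.

Lemma null_Mg a b : null_term (@Mg R a b) = false. Proof. by rewrite /Mg; case: ifP. Qed.
Lemma null_Sp a b : null_term (@Sp R a b) = false. Proof. by rewrite /Sp; case: ifP. Qed.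
Lemma null_Xc a b : null_term (@Xc R a b) = false. Proof. by rewrite /Xc; case: ifP. Qed.
Lemma null_Wd a : null_term (@Wd R a) = false. Proof. by case: a. Qed.
Lemma null_Mit a : null_term (@Mit R a) = false.
Proof. by elim: a => //= a ->; rewrite null_Mg. Qed.
Lemma null_Sit a : null_term (@Sit R a) = false.
Proof. by elim: a => //= a ->; rewrite null_Sp. Qed.
Lemma null_Wones a : null_term (@Wones R a) = false. Proof. by elim: a. Qed.

Lemma reduced_Mg a b : reduced (@Mg R a b). Proof. by rewrite /Mg; case: ifP. Qed.
Lemma reduced_Sp a b : reduced (@Sp R a b). Proof. by rewrite /Sp; case: ifP. Qed.
Lemma reduced_Xc a b : reduced (@Xc R a b). Proof. by rewrite /Xc; case: ifP. Qed.
Lemma reduced_Wd a : reduced (@Wd R a). Proof. by case: a. Qed.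
Lemma reduced_Mit a : reduced (@Mit R a).
Proof. by elim: a => //= a ->; rewrite null_Mg null_Mit reduced_Mg. Qed.
Lemma reduced_Sit a : reduced (@Sit R a).
Proof. by elim: a => //= a ->; rewrite null_Sp null_Sit reduced_Sp. Qed.
Lemma reduced_Wones a : reduced (@Wones R a). Proof. by elim: a. Qed.

Lemma reduced_tsum (l : seq tm) : reduced (tsum l) = all reduced l.
Proof. by elim: l => //= h l ->. Qed.

Definition derivedE := (null_Mg, null_Sp, null_Xc, null_Wd, null_Mit, null_Sit,
  null_Wones, reduced_Mg, reduced_Sp, reduced_Xc, reduced_Wd, reduced_Mit,
  reduced_Sit, reduced_Wones).

Lemma reduced_R2term a c s t : reduced (@R2term R a c s t).
Proof. by rewrite /R2term /= !derivedE. Qed.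

Lemma reduced_R4aterm a b t : reduced (@R4aterm R a b t).
Proof. by rewrite /R4aterm /= !derivedE. Qed.

Lemma reduced_R4bterm a b t : reduced (@R4bterm R a b t).
Proof. by rewrite /R4bterm /= !derivedE. Qed.

Lemma rel_inst_AW_or_red sch (f g : tm) (s t : obj) :
  rel_inst sch s t f g -> rel_inst false s t f g \/ ~~ black s.
Proof.
case=> *; first [by left; constructor | right].
all: by rewrite /black ?all_cat /= ?andbF.
Qed.

Lemma rel_inst_reduced (f g : tm) (s t : obj) :
  rel_inst false s t f g -> reduced f && reduced g.
Proof.
case=> *; apply/andP; split; rewrite ?reduced_tsum; try by rewrite /= ?derivedE.
- by apply/all_allpairsP => *; apply: reduced_R2term.
- by apply: all_mapT => t'; apply: reduced_R4aterm.
- by apply: all_mapT => t'; apply: reduced_R4bterm.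
Qed.

Lemma retract_through sch (lhs rhs : tm) (s t u : obj) :
  eqv sch s u lhs rhs -> black s -> black u ->
  (~~ black t -> null_term lhs && null_term rhs) ->
  (black t -> eqv false s u (retract lhs) (retract rhs)) ->
  eqv false s u (retract lhs) (retract rhs).
Proof.
move=> e bs bu red_null black_eqv; have [/black_eqv // | /red_null] := boolP (black t).
by case/andP; apply: retract_null e bs bu.
Qed.

Lemma retract_comp_congr sch (f f' g g' : tm) (s t u : obj) :
  eqv sch s t f f' -> eqv sch t u g g' -> black s -> black u ->
  (black t -> eqv false s t (retract f) (retract f')) ->
  (black t -> eqv false t u (retract g) (retract g')) ->
  eqv false s u (retract (TComp g f)) (retract (TComp g' f')).
Proof.
move=> ef eg bs bu IHf IHg.
have [[hf hf'] [hg hg']] := (eqv_has_type ef, eqv_has_type eg).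
apply: (retract_through (t := t) (eqv_comp ef eg)) => // [nbt | bt].
  have /andP[nf _] := null_through_red hf hg bs bu nbt.
  by have /andP[nf' _] := null_through_red hf' hg' bs bu nbt; rewrite /= nf nf' !orbT.
apply: eqv_trans (retract_comp hf hg bs bt bu) _.
apply: eqv_trans (eqv_comp (IHf bt) (IHg bt)) _.
exact/eqv_sym/(retract_comp hf' hg' bs bt bu).
Qed.

Lemma retract_compDl sch (f g g' : tm) (s t u : obj) :
  black s -> black u -> has_type sch f s t -> has_type sch g t u -> has_type sch g' t u ->
  eqv false s u (retract (TComp (TAdd g g') f))
    (retract (TAdd (TComp g f) (TComp g' f))).
Proof.
move=> bs bu hf hg hg'.
apply: (retract_through (t := t) (eqv_compDl hf hg hg')) => // [nbt | bt].
  by have /andP[nf _] := null_through_red hf hg bs bu nbt; rewrite /= nf !orbT.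
have [[rf rg] rg'] := (has_type_retract hf bs bt, has_type_retract hg bt bu,
  has_type_retract hg' bt bu).
apply: eqv_trans (retract_comp hf (ht_add hg hg') bs bt bu) _.
apply: eqv_trans (eqv_compDl rf rg rg') _.
exact: eqv_add (eqv_sym (retract_comp hf hg bs bt bu))
  (eqv_sym (retract_comp hf hg' bs bt bu)).
Qed.

Lemma retract_compDr sch (f f' g : tm) (s t u : obj) :
  black s -> black u -> has_type sch f s t -> has_type sch f' s t -> has_type sch g t u ->
  eqv false s u (retract (TComp g (TAdd f f')))
    (retract (TAdd (TComp g f) (TComp g f'))).
Proof.
move=> bs bu hf hf' hg.
apply: (retract_through (t := t) (eqv_compDr hf hf' hg)) => // [nbt | bt].
  by have /andP[_ ng] := null_through_red hf hg bs bu nbt; rewrite /= ng.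
have [[rf rf'] rg] := (has_type_retract hf bs bt, has_type_retract hf' bs bt,
  has_type_retract hg bt bu).
apply: eqv_trans (retract_comp (ht_add hf hf') hg bs bt bu) _.
apply: eqv_trans (eqv_compDr rf rf' rg) _.
exact: eqv_add (eqv_sym (retract_comp hf hg bs bt bu))
  (eqv_sym (retract_comp hf' hg bs bt bu)).
Qed.

Lemma retract_compZl sch c (f g : tm) (s t u : obj) :
  black s -> black u -> has_type sch f s t -> has_type sch g t u ->
  eqv false s u (retract (TComp (TScal c g) f)) (retract (TScal c (TComp g f))).
Proof.
move=> bs bu hf hg.
apply: (retract_through (t := t) (eqv_compZl c hf hg)) => // [nbt | bt].
  by have /andP[nf _] := null_through_red hf hg bs bu nbt; rewrite /= nf !orbT.
apply: eqv_trans (retract_comp hf (ht_scal c hg) bs bt bu) _.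
apply: eqv_trans (eqv_compZl c (has_type_retract hf bs bt) (has_type_retract hg bt bu)) _.
exact/eqv_scal/eqv_sym/(retract_comp hf hg bs bt bu).
Qed.

Lemma retract_compZr sch c (f g : tm) (s t u : obj) :
  black s -> black u -> has_type sch f s t -> has_type sch g t u ->
  eqv false s u (retract (TComp g (TScal c f))) (retract (TScal c (TComp g f))).
Proof.
move=> bs bu hf hg.
apply: (retract_through (t := t) (eqv_compZr c hf hg)) => // [nbt | bt].
  by have /andP[nf _] := null_through_red hf hg bs bu nbt; rewrite /= nf !orbT.
apply: eqv_trans (retract_comp (ht_scal c hf) hg bs bt bu) _.
apply: eqv_trans (eqv_compZr c (has_type_retract hf bs bt) (has_type_retract hg bt bu)) _.
exact/eqv_scal/eqv_sym/(retract_comp hf hg bs bt bu).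
Qed.

Lemma retract_compA sch (f g h : tm) (s t u v : obj) :
  has_type sch f s t -> has_type sch g t u -> has_type sch h u v -> black s -> black v ->
  eqv false s v (retract (TComp h (TComp g f))) (retract (TComp (TComp h g) f)).
Proof.
move=> hf hg hh bs bv; have e := eqv_compA hf hg hh.
apply: (retract_through (t := t) e) => // [nbt | bt].
  have /andP[nf _] := null_through_red hf (ht_comp hg hh) bs bv nbt.
  by rewrite /= nf !orbT.
apply: (retract_through (t := u) e) => // [nbu | bu].
  by have /andP[_ nh] := null_through_red (ht_comp hf hg) hh bs bv nbu; rewrite /= nh.
have [[rf rg] rh] := (has_type_retract hf bs bt, has_type_retract hg bt bu,
  has_type_retract hh bu bv).
apply: eqv_trans (retract_comp (ht_comp hf hg) hh bs bu bv) _.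
apply: eqv_trans (eqv_comp (retract_comp hf hg bs bt bu) (eqv_refl rh)) _.
apply: eqv_trans (eqv_compA rf rg rh) _.
apply: eqv_sym; apply: eqv_trans (retract_comp hf (ht_comp hg hh) bs bt bv) _.
exact: eqv_comp (eqv_refl rf) (retract_comp hg hh bt bu bv).
Qed.

Lemma retract_interchange sch (f f' g g' : tm) (s t u s' t' u' : obj) :
  has_type sch f s t -> has_type sch g t u -> has_type sch f' s' t' ->
  has_type sch g' t' u' -> black (s ++ s') -> black (u ++ u') ->
  eqv false (s ++ s') (u ++ u') (retract (TComp (TTens g g') (TTens f f')))
    (retract (TTens (TComp g f) (TComp g' f'))).
Proof.
move=> hf hg hf' hg' bss' buu'; have e := eqv_interchange hf hg hf' hg'.
move: (bss') (buu'); rewrite !black_cat => /andP[bs bs'] /andP[bu bu'].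
apply: (retract_through (t := t) e) => // [nbt | bt].
  by have /andP[nf _] := null_through_red hf hg bs bu nbt; rewrite /= nf !orbT.
apply: (retract_through (t := t') e) => // [nbt' | bt'].
  by have /andP[nf' _] := null_through_red hf' hg' bs' bu' nbt'; rewrite /= nf' !orbT.
have btt' : black (t ++ t') by rewrite black_cat bt bt'.
apply: eqv_trans (retract_comp (ht_tens hf hf') (ht_tens hg hg') bss' btt' buu') _.
apply: eqv_trans (eqv_interchange (has_type_retract hf bs bt) (has_type_retract hg bt bu)
  (has_type_retract hf' bs' bt') (has_type_retract hg' bt' bu')) _.
exact: eqv_tens (eqv_sym (retract_comp hf hg bs bt bu))
  (eqv_sym (retract_comp hf' hg' bs' bt' bu')).
Qed.

Lemma retract_rel_inst sch (f g : tm) (s t : obj) :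
  rel_inst sch s t f g -> has_type sch f s t -> has_type sch g s t ->
  black s -> black t -> eqv false s t (retract f) (retract g).
Proof.
move=> hr hf hg bs bt; have [hr' | /negP //] := rel_inst_AW_or_red hr.
have /andP[rf rg] := rel_inst_reduced hr'.
have := has_type_retract hf bs bt; have := has_type_retract hg bs bt.
by rewrite !retract_reduced // => hg' hf'; apply: eqv_rel hr' hf' hg'.
Qed.

Lemma retract_eqv sch (f g : tm) (s t : obj) :
  eqv sch s t f g -> black s -> black t -> eqv false s t (retract f) (retract g).
Proof.
(* axioms without composition: [retract] maps them to the same axiom *)
elim=> {f g s t};
  try by move=> * /=; constructor; apply: has_type_retract; eassumption.
- by move=> f g s t _ IH bs bt; apply/eqv_sym/IH.
- by move=> f g h s t _ IH1 _ IH2 bs bt; apply: eqv_trans (IH1 bs bt) (IH2 bs bt).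
- move=> f f' g g' s t u ef IHf eg IHg bs bu.
  by apply: (retract_comp_congr ef eg bs bu) => bt; [apply: IHf | apply: IHg].
- move=> f f' g g' s t s' t' _ IHf _ IHg.
  rewrite !black_cat => /andP[bs bs'] /andP[bt bt'].
  exact: eqv_tens (IHf bs bt) (IHg bs' bt').
- by move=> f f' g g' s t _ IHf _ IHg bs bt; apply: eqv_add (IHf bs bt) (IHg bs bt).
- by move=> c f f' s t _ IH bs bt; apply/eqv_scal/IH.
- by move=> f g h s t u v hf hg hh bs bv; exact: retract_compA hf hg hh bs bv.
- move=> f s t hf bs bt.
  have hid : has_type sch (TId t) t t := ht_id (has_type_valid hf).2.
  exact: eqv_trans (retract_comp hf hid bs bt bt) (eqv_id_l (has_type_retract hf bs bt)).
- move=> f s t hf bs bt.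
  have hid : has_type sch (TId s) s s := ht_id (has_type_valid hf).1.
  exact: eqv_trans (retract_comp hid hf bs bs bt) (eqv_id_r (has_type_retract hf bs bt)).
- move=> f g h s1 t1 s2 t2 s3 t3 hf hg hh.
  rewrite !black_cat => /and3P[bs1 bs2 bs3] /and3P[bt1 bt2 bt3].
  exact: eqv_tensA (has_type_retract hf bs1 bt1) (has_type_retract hg bs2 bt2)
    (has_type_retract hh bs3 bt3).
- by move=> s s' _ _; rewrite black_cat => /andP[bs bs'] _; apply: eqv_tensId.
- move=> f f' g g' s t u s' t' u' hf hg hf' hg' bs bu.
  exact: retract_interchange hf hg hf' hg' bs bu.
- by move=> f g g' s t u hf hg hg' bs bu; exact: retract_compDl bs bu hf hg hg'.
- by move=> f f' g s t u hf hf' hg bs bu; exact: retract_compDr bs bu hf hf' hg.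
- by move=> c f g s t u hf hg bs bu; exact: retract_compZl bs bu hf hg.
- by move=> c f g s t u hf hg bs bu; exact: retract_compZr bs bu hf hg.
- move=> f f' g s t s' t' hf hf' hg; rewrite !black_cat => /andP[bs bs'] /andP[bt bt'].
  by apply: eqv_tensDl; apply: has_type_retract; eassumption.
- move=> f g g' s t s' t' hf hg hg'; rewrite !black_cat => /andP[bs bs'] /andP[bt bt'].
  by apply: eqv_tensDr; apply: has_type_retract; eassumption.
- move=> c f g s t s' t' hf hg; rewrite !black_cat => /andP[bs bs'] /andP[bt bt'].
  by apply: eqv_tensZl; apply: has_type_retract; eassumption.
- move=> c f g s t s' t' hf hg; rewrite !black_cat => /andP[bs bs'] /andP[bt bt'].
  by apply: eqv_tensZr; apply: has_type_retract; eassumption.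
- exact: retract_rel_inst.
Qed.

End Retraction.

Theorem corollary3p16 (R : comPzRingType) :
  [/\ (forall (s t : seq (lab R)) (f g : term R),
         eqv false s t f g -> eqv true s t f g),
      (forall (s t : seq (lab R)) (f g : term R),
         has_type false f s t -> has_type false g s t ->
         eqv true s t f g -> eqv false s t f g)
    & (forall (s t : seq (lab R)) (h : term R),
         all (valid false) s -> all (valid false) t -> has_type true h s t ->
         exists2 f : term R, has_type false f s t & eqv true s t f h)].
Proof.
split=> [s t f g | s t f g hf hg e | s t h bs bt hh]; first exact: eqv_widen.
- have [bs bt] := has_type_valid hf.
  apply: eqv_trans (eqv_sym (eqv_retract_term hf bs bt)) _.
  exact: eqv_trans (retract_eqv e bs bt) (eqv_retract_term hg bs bt).
- by exists (retract h); [apply: has_type_retract hh bs bt | apply: eqv_retract_term].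
Qed.
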